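(* In the setting described in the context, let $\hat u_0=\min\{x\in[v,z_0]: f^2(x)=d\}$, and for $n\ge1$ let $\hat\mu'_{m,n}=\max\{x\in[v,\hat u_0]: f^{m+2n}(x)=d\}$ (these sets are nonempty). Then for each $n\ge1$, every periodic point of $f$ in $[\hat\mu'_{m,n},\hat u_0]$ whose least period is odd has least period $\ge m+2n$.
   Context: Let $I$ be a compact interval and $f:I\to I$ continuous; $f^1=f$, $f^n=f\circ f^{n-1}$. A point $x_0$ is a periodic point of least period $k$ (a period-$k$ point) if $f^k(x_0)=x_0$ and $f^i(x_0)\ne x_0$ for $0<i<k$. Let $m\ge3$ be odd and let $P$ be a periodic orbit of $f$ of least period $m$. Put $e=f^{m-1}(\min P)$. Let $v\in[\min P,e)$ be a point with $f(v)=e$, and let $z\in(v,e)$ be a fixed point of $f$ (such points exist). Define $z_0=\min\{x\in[v,z]: f^2(x)=x\}$ and $d=\max\{x\in[\min P,v]: f^2(x)=z_0\}$ (both sets are nonempty). *)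

From Stdlib Require Import Reals Lra Lia.
Open Scope R_scope.

Definition iter (f : R -> R) (n : nat) (x : R) : R := Nat.iter n f x.

Definition cont_on (a b : R) (f : R -> R) : Prop :=
  forall x, a <= x <= b ->
  forall eps, 0 < eps -> exists delta, 0 < delta /\
    forall y, a <= y <= b -> Rabs (y - x) < delta -> Rabs (f y - f x) < eps.

Definition maps_into (a b : R) (f : R -> R) : Prop :=
  forall x, a <= x <= b -> a <= f x <= b.

Definition least_period (f : R -> R) (x : R) (k : nat) : Prop :=
  (0 < k)%nat /\ iter f k x = x /\
  forall i, (0 < i < k)%nat -> iter f i x <> x.

Definition is_min_of (S : R -> Prop) (x : R) : Prop :=
  S x /\ forall y, S y -> x <= y.
Definition is_max_of (S : R -> Prop) (x : R) : Prop :=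
  S x /\ forall y, S y -> y <= x.

(* On [v, z0] the map f^2 climbs from f^2 v = min P to f^2 z0 = z0, and u0 is the
   first point where it reaches d.  Since f^4 u0 = z0 and f z0 >= z0, every odd iterate f^t with t >= 5 sends u0 to f z0 >= z0, while
   f^2 maps [u0, z0] onto a set containing [u0, z0], so u0 has f^(2s)-preimages
   w in [u0, z0].  Let N = m + 2n and let x in [mu, u0] be periodic of odd period
   k < N.  Then x < u0, and some odd iterate f^t x with 5 <= t <= N lies below a
   point w with f^(N-t) w = d (take t = k, or t = 5 when k = 3, using
   f^2 x < d).  The intermediate value theorem for f^t on [x, u0] then yields
   y >= x with f^N y = d and f^t y = w > f^t x; maximality of mu forces y = x,
   a contradiction. *)
From Stdlib Require Import Reals Lra Lia.
Open Scope R_scope.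

Lemma iter_add f (p q : nat) x : iter f (p + q) x = iter f p (iter f q x).
Proof. unfold iter; induction p as [|p IHp]; simpl; [reflexivity | now rewrite IHp]. Qed.

Lemma iter_S f (n : nat) x : iter f (S n) x = f (iter f n x).
Proof. reflexivity. Qed.

Lemma f_iter_pred f (k : nat) x : (0 < k)%nat -> f (iter f (k - 1) x) = iter f k x.
Proof. intros Hk; destruct k as [|k]; [lia|]. now rewrite Nat.sub_succ, Nat.sub_0_r. Qed.

Lemma iter_mul_fixed f (p j : nat) y : iter f p y = y -> iter f (p * j) y = y.
Proof.
  intros Hy; induction j as [|j IHj]; [now rewrite Nat.mul_0_r|].
  now rewrite Nat.mul_succ_r, Nat.add_comm, iter_add, IHj, Hy.
Qed.

Lemma iter_maps_into a b f : maps_into a b f -> forall n, maps_into a b (iter f n).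
Proof.
  intros Hf n; induction n as [|n IHn]; intros x Hx; [exact Hx|].
  rewrite iter_S; apply Hf, IHn, Hx.
Qed.

Lemma iter_cont_on a b f : cont_on a b f -> maps_into a b f -> forall n, cont_on a b (iter f n).
Proof.
  intros Hc Hm n; induction n as [|n IHn]; intros x Hx eps Heps.
  - exists eps; split; [exact Heps | intros y _ Hyx; exact Hyx].
  - destruct (Hc (iter f n x) (iter_maps_into a b f Hm n x Hx) eps Heps) as [d1 [Hd1 H1]].
    destruct (IHn x Hx d1 Hd1) as [d2 [Hd2 H2]].
    exists d2; split; [exact Hd2|]; intros y Hy Hyx.
    rewrite !iter_S; apply H1; [apply iter_maps_into; auto | apply H2; auto].
Qed.

Lemma cont_on_id_minus a b f : cont_on a b f -> cont_on a b (fun t => t - f t).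
Proof.
  intros Hc x Hx eps Heps.
  destruct (Hc x Hx (eps / 2)) as [d1 [Hd1 H1]]; [lra|].
  exists (Rmin d1 (eps / 2)); split; [apply Rmin_pos; lra|]; intros y Hy Hyx.
  assert (Hf := H1 y Hy (Rlt_le_trans _ _ _ Hyx (Rmin_l _ _))).
  assert (Hid := Rlt_le_trans _ _ _ Hyx (Rmin_r _ _)).
  revert Hf Hid; unfold Rabs; repeat destruct Rcase_abs; lra.
Qed.

Definition clamp (a b y : R) : R := Rmax a (Rmin b y).

Lemma clamp_in a b y : a <= b -> a <= clamp a b y <= b.
Proof. intros; unfold clamp, Rmax, Rmin; repeat destruct Rle_dec; lra. Qed.

Lemma clamp_id a b y : a <= y <= b -> clamp a b y = y.
Proof. intros; unfold clamp, Rmax, Rmin; repeat destruct Rle_dec; lra. Qed.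

Lemma clamp_lipschitz a b y y0 : a <= b -> Rabs (clamp a b y - clamp a b y0) <= Rabs (y - y0).
Proof.
  intros; unfold clamp, Rmax, Rmin; repeat destruct Rle_dec;
    unfold Rabs; repeat destruct Rcase_abs; lra.
Qed.

(* Stdlib's IVT needs continuity on all of R; composing with [clamp a b] provides it. *)
Lemma cont_on_ivt a b h p q t : a <= b -> cont_on a b h -> a <= p -> p <= q -> q <= b ->
  h p <= t -> t <= h q -> exists y, p <= y <= q /\ h y = t.
Proof.
  intros Hab Hc Hp Hpq Hq Hhp Hhq.
  set (F := fun y => h (clamp a b y) - t).
  assert (HF : continuity F).
  { intros y0 eps Heps.
    destruct (Hc (clamp a b y0) (clamp_in a b y0 Hab) eps Heps) as [d [Hd H]].
    exists d; split; [exact Hd|]; intros y [_ Hy]; simpl in *; unfold R_dist in *; unfold F.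
    replace (h (clamp a b y) - t - (h (clamp a b y0) - t))
      with (h (clamp a b y) - h (clamp a b y0)) by ring.
    apply H; [apply clamp_in; auto|].
    eapply Rle_lt_trans; [apply clamp_lipschitz; auto | exact Hy]. }
  assert (Fp : F p = h p - t) by (unfold F; rewrite clamp_id; lra).
  assert (Fq : F q = h q - t) by (unfold F; rewrite clamp_id; lra).
  destruct (IVT_cor F p q HF Hpq) as [y [Hy Fy]]; [rewrite Fp, Fq; nra|].
  exists y; split; [exact Hy|]; unfold F in Fy; rewrite clamp_id in Fy; lra.
Qed.

Section OddPeriodsNearU0.

Variables (a b : R) (f : R -> R) (m : nat) (p0 v z z0 d u0 : R).
Hypothesis Hab : a <= b.
Hypothesis Hcont : cont_on a b f.
Hypothesis Hmaps : maps_into a b f.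
Hypothesis Hm3 : (3 <= m)%nat.
Hypothesis Hp0I : a <= p0 <= b.
Hypothesis Hp0per : least_period f p0 m.
Hypothesis Hv : p0 <= v < iter f (m - 1) p0.
Hypothesis Hfv : f v = iter f (m - 1) p0.
Hypothesis Hz : z < iter f (m - 1) p0.
Hypothesis Hz0 : is_min_of (fun x => v <= x <= z /\ iter f 2 x = x) z0.
Hypothesis Hd : is_max_of (fun x => p0 <= x <= v /\ iter f 2 x = z0) d.
Hypothesis Hu0 : is_min_of (fun x => v <= x <= z0 /\ iter f 2 x = d) u0.

Let iter_cont := iter_cont_on a b f Hcont Hmaps.

Lemma v_z0_in_I : a <= v /\ z0 <= b.
Proof.
  destruct Hz0 as [[[_ Hz0z] _] _].
  pose proof (iter_maps_into a b f Hmaps (m - 1) p0 Hp0I); lra.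
Qed.

Lemma iter2_v : iter f 2 v = p0.
Proof.
  destruct Hp0per as [Hm0 [Hpm _]].
  change (f (f v) = p0); rewrite Hfv, f_iter_pred; assumption.
Qed.

Lemma fixed_point_ge_z0 y : v <= y <= z0 -> f y = y -> z0 <= y.
Proof.
  intros Hy Hfy; destruct Hz0 as [[[_ Hz0z] _] Hz0min].
  apply Hz0min; split; [lra|].
  change (f (f y) = y); now rewrite !Hfy.
Qed.

Lemma z0_le_f_z0 : z0 <= f z0.
Proof.
  destruct Hz0 as [[Hvz0 _] _].
  destruct (Rle_lt_dec z0 (f z0)) as [|Hlt]; [assumption | exfalso].
  pose proof v_z0_in_I.
  destruct (cont_on_ivt a b (fun t => t - f t) v z0 0 Hab (cont_on_id_minus a b f Hcont))
    as [c [Hc Hfc]]; try lra.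
  assert (c <> z0) by (intros Heq; rewrite Heq in Hfc; lra).
  assert (z0 <= c) by (apply fixed_point_ge_z0; lra).
  lra.
Qed.

Lemma d_lt_z0 : d < z0.
Proof.
  destruct Hp0per as [_ [_ Hpi]].
  destruct Hd as [[[Hpd Hdv] Hdf] _]; destruct Hz0 as [[Hvz0 _] _].
  destruct (Rle_lt_dec z0 d) as [Hle|]; [exfalso | assumption].
  assert (Hvd : v = d) by lra.
  (* if d = v = z0, then v = f^2 v = min P would be a point of period 2 < m *)
  assert (Hvp : v = p0) by (rewrite <- iter2_v, Hvd, Hdf; lra).
  apply (Hpi 2%nat); [lia|].
  rewrite <- Hvp, Hvd, Hdf; lra.
Qed.

Lemma u0_lt_z0 : u0 < z0.
Proof.
  destruct Hu0 as [[[_ Hu0z0] Hu0f] _]; destruct Hz0 as [[_ Hz0f] _].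
  assert (u0 <> z0) by (intros Heq; pose proof d_lt_z0; rewrite Heq, Hz0f in Hu0f; lra).
  lra.
Qed.

Lemma iter2_lt_d y : v <= y < u0 -> iter f 2 y < d.
Proof.
  intros Hy.
  destruct Hd as [[[Hpd _] _] _]; destruct Hu0 as [_ Hu0min].
  pose proof u0_lt_z0.
  destruct (Rle_lt_dec d (iter f 2 y)) as [Hle|]; [exfalso | assumption].
  pose proof v_z0_in_I.
  destruct (cont_on_ivt a b (iter f 2) v y d Hab (iter_cont 2)) as [c [Hc Hfc]];
    try (rewrite ?iter2_v; lra).
  assert (u0 <= c) by (apply Hu0min; split; [lra | exact Hfc]).
  lra.
Qed.

Lemma iter4_u0 : iter f 4 u0 = z0.
Proof.
  destruct Hu0 as [[_ Hu0f] _]; destruct Hd as [[_ Hdf] _].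
  now rewrite (iter_add f 2 2), Hu0f, Hdf.
Qed.

Lemma iter_even_u0 j : (2 <= j)%nat -> iter f (2 * j) u0 = z0.
Proof.
  intros Hj; destruct Hz0 as [[_ Hz0f] _].
  replace (2 * j)%nat with (2 * (j - 2) + 4)%nat by lia.
  now rewrite iter_add, iter4_u0, iter_mul_fixed.
Qed.

Lemma iter_odd_u0 j : iter f (2 * j + 5) u0 = f z0.
Proof.
  destruct Hz0 as [[_ Hz0f] _].
  replace (2 * j + 5)%nat with (S (2 * j) + 4)%nat by lia.
  now rewrite iter_add, iter4_u0, iter_S, iter_mul_fixed.
Qed.

(* f^2 u0 = d <= u0 and f^2 z0 = z0, so f^2 maps [u0, z0] onto a superset of itself. *)
Lemma iter_even_onto_u0 s : exists w, u0 <= w <= z0 /\ iter f (2 * s) w = u0.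
Proof.
  destruct Hu0 as [[[Hvu0 _] Hu0f] _]; destruct Hz0 as [[_ Hz0f] _].
  destruct Hd as [[[_ Hdv] _] _].
  pose proof u0_lt_z0; pose proof v_z0_in_I.
  induction s as [|s [w' [Hw' Hw'f]]].
  - exists u0; split; [lra | reflexivity].
  - destruct (cont_on_ivt a b (iter f 2) u0 z0 w' Hab (iter_cont 2)) as [w [Hw Hwf]]; try lra.
    exists w; split; [exact Hw|].
    replace (2 * S s)%nat with (2 * s + 2)%nat by lia.
    now rewrite iter_add, Hwf.
Qed.

Lemma not_fixed_below_u0 y : v <= y <= u0 -> f y <> y.
Proof.
  intros Hy Hfy; pose proof u0_lt_z0.
  assert (z0 <= y) by (apply fixed_point_ge_z0; [lra | exact Hfy]).
  lra.
Qed.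

Lemma u0_not_periodic k : ~ least_period f u0 k.
Proof.
  intros [Hk [Hku0 _]]; pose proof u0_lt_z0.
  assert (Hu0fix : iter f (k * 4) u0 = u0) by now apply iter_mul_fixed.
  replace (k * 4)%nat with (2 * (2 * k))%nat in Hu0fix by lia.
  rewrite iter_even_u0 in Hu0fix; [lra | lia].
Qed.

(* f^t u0 = f z0 >= z0 >= w, so f^t crosses w on [x, u0] at some y with f^N y = d;
   then y <= mu <= x forces y = x. *)
Lemma iter_odd_not_below_preimage N mu x j r w :
  is_max_of (fun y => v <= y <= u0 /\ iter f N y = d) mu -> mu <= x <= u0 ->
  N = (2 * j + 5 + r)%nat -> w <= z0 -> iter f r w = d -> iter f (2 * j + 5) x < w -> False.
Proof.
  intros [[[Hvmu _] _] Hmumax] Hx HN Hwz0 Hwd Hlt.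
  pose proof z0_le_f_z0; pose proof u0_lt_z0; pose proof v_z0_in_I.
  destruct (cont_on_ivt a b (iter f (2 * j + 5)) x u0 w Hab (iter_cont _)) as [y [Hy Hyw]];
    try (rewrite ?iter_odd_u0; lra).
  assert (y <= mu).
  { apply Hmumax; split; [lra|].
    rewrite HN, Nat.add_comm, iter_add, Hyw; exact Hwd. }
  assert (y = x) by lra; subst y; lra.
Qed.

Lemma iter_odd_not_below_d N mu x :
  is_max_of (fun y => v <= y <= u0 /\ iter f N y = d) mu -> mu <= x <= u0 ->
  Nat.Odd N -> (5 <= N)%nat -> iter f N x < d -> False.
Proof.
  intros Hmu Hx [j HNj] HN5 Hlt; pose proof d_lt_z0.
  apply (iter_odd_not_below_preimage N mu x (j - 2) 0 d); [exact Hmu | exact Hx | lia | lra | reflexivity|].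
  now replace (2 * (j - 2) + 5)%nat with N by lia.
Qed.

Lemma iter_odd_not_below_u0 N mu x t :
  is_max_of (fun y => v <= y <= u0 /\ iter f N y = d) mu -> mu <= x <= u0 ->
  Nat.Odd N -> Nat.Odd t -> (5 <= t)%nat -> (t < N)%nat -> iter f t x < u0 -> False.
Proof.
  intros Hmu Hx [i Hi] [j Hj] Ht HtN Hlt.
  destruct (iter_even_onto_u0 (i - j - 1)) as [w [Hw Hwu0]].
  destruct Hu0 as [[_ Hu0f] _].
  apply (iter_odd_not_below_preimage N mu x (j - 2) (2 + 2 * (i - j - 1)) w);
    [exact Hmu | exact Hx | lia | lra | |].
  - now rewrite iter_add, Hwu0.
  - replace (2 * (j - 2) + 5)%nat with t by lia; lra.
Qed.

Lemma odd_period_ge N mu x k :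
  Nat.Odd N -> (5 <= N)%nat ->
  is_max_of (fun y => v <= y <= u0 /\ iter f N y = d) mu -> mu <= x <= u0 ->
  least_period f x k -> Nat.Odd k -> (N <= k)%nat.
Proof.
  intros HNodd HN5 Hmu Hx Hk Hkodd.
  destruct (Compare_dec.le_lt_dec N k) as [|HkN]; [assumption | exfalso].
  pose proof (proj1 (proj1 Hmu)) as Hvmu.
  assert (Hxu0 : x < u0).
  { destruct (Rle_lt_dec u0 x) as [Hle|]; [exfalso | assumption].
    assert (x = u0) by lra; subst x; exact (u0_not_periodic k Hk). }
  destruct Hk as [Hk0 [Hkx _]].
  assert (Hk1 : k <> 1%nat) by (intros ->; exact (not_fixed_below_u0 x ltac:(lra) Hkx)).
  destruct (Nat.eq_dec k 3) as [->|Hk3].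
  - (* period 3 gives f^5 x = f^2 x < d *)
    assert (H5 : iter f 5 x < d) by (rewrite (iter_add f 2 3), Hkx; apply iter2_lt_d; lra).
    destruct (Nat.eq_dec N 5) as [->|HN].
    + exact (iter_odd_not_below_d 5 mu x Hmu Hx HNodd HN5 H5).
    + apply (iter_odd_not_below_u0 N mu x 5 Hmu Hx HNodd); [exists 2%nat; lia | lia | lia |].
      pose proof (proj1 (proj1 Hd)); lra.
  - pose proof Hkodd as [c Hc].
    apply (iter_odd_not_below_u0 N mu x k Hmu Hx HNodd Hkodd); [lia | lia | lra].
Qed.

End OddPeriodsNearU0.

Theorem lemma10
  (a b : R) (f : R -> R) (m : nat) (p0 v z z0 d u0 : R)
  (Hab : a <= b)
  (Hcont : cont_on a b f) (Hmaps : maps_into a b f)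
  (Hm3 : (3 <= m)%nat) (Hmodd : Nat.Odd m)
  (* p0 = min P, where P is the orbit of p0, of least period m, in I *)
  (Hp0I : a <= p0 <= b)
  (Hp0per : least_period f p0 m)
  (Hp0min : forall i, (i < m)%nat -> p0 <= iter f i p0)
  (* e = f^(m-1)(min P) *)
  (Hv : p0 <= v < iter f (m - 1) p0)
  (Hfv : f v = iter f (m - 1) p0)
  (Hz : v < z < iter f (m - 1) p0)
  (Hfz : f z = z)
  (Hz0 : is_min_of (fun x => v <= x <= z /\ iter f 2 x = x) z0)
  (Hd : is_max_of (fun x => p0 <= x <= v /\ iter f 2 x = z0) d)
  (Hu0 : is_min_of (fun x => v <= x <= z0 /\ iter f 2 x = d) u0) :
  forall (n : nat) (mu : R), (1 <= n)%nat ->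
    is_max_of (fun x => v <= x <= u0 /\ iter f (m + 2 * n) x = d) mu ->
    forall (x : R) (k : nat), mu <= x <= u0 ->
      least_period f x k -> Nat.Odd k -> (m + 2 * n <= k)%nat.
Proof.
  intros n mu Hn Hmu x k Hx Hk Hkodd.
  apply (odd_period_ge a b f m p0 v z z0 d u0 Hab Hcont Hmaps Hm3 Hp0I Hp0per Hv Hfv
           (proj2 Hz) Hz0 Hd Hu0 (m + 2 * n) mu x k); try assumption.
  - destruct Hmodd as [i Hi]; exists (i + n)%nat; lia.
  - lia.
Qed.
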